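(* Let $\mathbb{F}$ be a field with $\mathrm{char}(\mathbb{F})\neq 2$, and let $L$ be a finite-dimensional pure, nonnilpotent, solvable Lie algebra over $\mathbb{F}$ of breadth $1$. Then $L$ has a basis $\{x,y\}$ such that $[x,y]=x$.
   Context: For $x\in L$, $b(x)=\mathrm{rank}(\mathrm{ad}_x)$ and $b(L)=\max\{b(x)\mid x\in L\}$ is the breadth of $L$. $L$ is pure if it has no abelian ideal as a direct summand; equivalently $Z(L)\subseteq[L,L]$, where $Z(L)$ is the center. *)

From HB Require Import structures.
From mathcomp Require Import all_boot all_order all_algebra.
Set Implicit Arguments. Unset Strict Implicit. Unset Printing Implicit Defensive.
Import GRing.Theory.
Local Open Scope ring_scope.


Definition is_lie_bracket (F : fieldType) (V : vectType F) (br : V -> V -> V) : Prop :=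
  [/\ (forall (a : F) (x y z : V), br (a *: x + y) z = a *: br x z + br y z),
      (forall (a : F) (x y z : V), br z (a *: x + y) = a *: br z x + br z y),
      (forall x : V, br x x = 0) &
      (forall x y z : V, br x (br y z) + br y (br z x) + br z (br x y) = 0)].

(* [U, W] : the subspace spanned by all brackets [u, w], u in U, w in W
   (spanned by brackets of basis vectors, by bilinearity) *)
Definition lie_brs (F : fieldType) (V : vectType F) (br : V -> V -> V)
  (U W : {vspace V}) : {vspace V} :=
  (<<[seq br u w | u <- vbasis U, w <- vbasis W]>>)%VS.

Definition derived_alg (F : fieldType) (V : vectType F) (br : V -> V -> V) :=
  lie_brs br fullv fullv.

Definition in_center (F : fieldType) (V : vectType F) (br : V -> V -> V) (z : V) :=
  forall y : V, br z y = 0.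

Definition lie_pure (F : fieldType) (V : vectType F) (br : V -> V -> V) :=
  forall z : V, in_center br z -> z \in derived_alg br.

Definition derived_series (F : fieldType) (V : vectType F) (br : V -> V -> V)
  (k : nat) : {vspace V} := iter k (fun U => lie_brs br U U) fullv%VS.

Definition lie_solvable (F : fieldType) (V : vectType F) (br : V -> V -> V) :=
  exists k, derived_series br k = 0%VS.

Definition lower_central (F : fieldType) (V : vectType F) (br : V -> V -> V)
  (k : nat) : {vspace V} := iter k (fun U => lie_brs br fullv U) fullv.

Definition lie_nilpotent (F : fieldType) (V : vectType F) (br : V -> V -> V) :=
  exists k, lower_central br k = 0%VS.

Definition lie_b (F : fieldType) (V : vectType F) (br : V -> V -> V) (x : V) : nat :=
  \dim (limg (linfun (br x))).

Definition has_breadth (F : fieldType) (V : vectType F) (br : V -> V -> V) (n : nat) :=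
  (exists x : V, lie_b br x = n) /\ (forall x : V, (lie_b br x <= n)%N).

From HB Require Import structures.
From mathcomp Require Import all_boot all_order all_algebra.
From Stdlib Require Import Classical.
Import GRing.Theory.
Local Open Scope ring_scope.

(* Breadth 1 means that every [ad x] has rank at most 1.  If some [ad x] is not
   of square zero, its image line is spanned by an eigenvector [a] with a
   nonzero eigenvalue; rescaling [x] gives [[x, a] = a].  Then every element is
   a central element plus a combination of [a] and [x], all brackets lie in
   [F a], and purity forces the center, which lies in [F a], to vanish: [L] is
   spanned by [a] and [x].  Otherwise [ad x ^ 2 = 0] for all [x]; polarizing
   gives [ad x ad y = - ad y ad x], and rank at most 1 then forces
   [[L, [L, L]] = 0], contradicting non-nilpotency. *)

Set Implicit Arguments.
Unset Strict Implicit.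

Section LieBracket.

Variables (F : fieldType) (V : vectType F) (br : V -> V -> V).
Hypothesis br_lie : is_lie_bracket br.

Lemma brDl x y z : br (x + y) z = br x z + br y z.
Proof. by case: br_lie => brl _ _ _; have := brl 1 x y z; rewrite !scale1r. Qed.

Lemma brDr x y z : br z (x + y) = br z x + br z y.
Proof. by case: br_lie => _ brr _ _; have := brr 1 x y z; rewrite !scale1r. Qed.

Lemma br0l z : br 0 z = 0.
Proof. by apply: (addrI (br 0 z)); rewrite -brDl !addr0. Qed.

Lemma br0r z : br z 0 = 0.
Proof. by apply: (addrI (br z 0)); rewrite -brDr !addr0. Qed.

Lemma brZl a x z : br (a *: x) z = a *: br x z.
Proof. by case: br_lie => brl _ _ _; have := brl a x 0 z; rewrite !addr0 br0l addr0. Qed.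

Lemma brZr a x z : br z (a *: x) = a *: br z x.
Proof. by case: br_lie => _ brr _ _; have := brr a x 0 z; rewrite !addr0 br0r addr0. Qed.

Lemma brNr x z : br z (- x) = - br z x.
Proof. by rewrite -scaleN1r brZr scaleN1r. Qed.

Lemma brxx x : br x x = 0.
Proof. by case: br_lie. Qed.

Lemma br_anti x y : br x y = - br y x.
Proof.
apply/eqP; rewrite -addr_eq0; apply/eqP.
by have := brxx (x + y); rewrite brDl !brDr !brxx add0r addr0.
Qed.

Lemma br_jacobi x y z : br x (br y z) + br y (br z x) + br z (br x y) = 0.
Proof. by case: br_lie. Qed.

Lemma ad_lfunE x y : linfun (br x) y = br x y.
Proof.
have br_linear : linear (br x) by move=> k u v; case: br_lie => _ brr _ _; exact: brr.
exact: (lfunE (HB.pack (br x) (GRing.isLinear.Build F V V *:%R (br x) br_linear))).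
Qed.

Lemma lie_nilpotent_of_br_br_eq0 :
  (forall x y z, br x (br y z) = 0) -> lie_nilpotent br.
Proof.
move=> br_br0; exists 2%N; apply/eqP; rewrite -subv0.
apply/span_subvP => _ /allpairsP [[u w] [_ /= /vbasis_mem w_der ->]].
have der_ker : (derived_alg br <= lker (linfun (br u)))%VS.
  by apply/span_subvP => _ /allpairsP [[p q] [_ _ ->]]; rewrite memv_ker ad_lfunE br_br0.
by move: (subvP der_ker w w_der); rewrite memv_ker ad_lfunE memv0.
Qed.

Hypothesis breadth_le1 : forall x, (lie_b br x <= 1)%N.

Lemma br_in_line x v : br x v != 0 -> forall w, br x w \in <[br x v]>%VS.
Proof.
move=> xv_neq0 w.
have in_img u : br x u \in limg (linfun (br x)).
  by rewrite -ad_lfunE memv_img ?memvf.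
have /eqP -> : (<[br x v]> == limg (linfun (br x)))%VS.
  by rewrite eqEdim -memvE in_img dim_vline xv_neq0; exact: breadth_le1.
exact: in_img.
Qed.

Lemma eigvec_of_ad_sq_neq0 x w :
  br x (br x w) != 0 -> exists y a, a != 0 /\ br y a = a.
Proof.
set b := br x w; set a := br x b => a_neq0.
have [c xa] : exists c, br x a = c *: a by apply/vlineP; exact: br_in_line.
have [k xw] : exists k, b = k *: a by apply/vlineP; exact: br_in_line.
have c_neq0 : c != 0.
  by apply: contraNneq a_neq0 => c0; rewrite /a xw brZr xa c0 scale0r scaler0.
by exists (c^-1 *: x), a; rewrite brZl xa scalerA mulVf // scale1r.
Qed.

Section SquareZero.

Hypothesis ad_sq0 : forall x w, br x (br x w) = 0.

Lemma br_br_anti x y z : br x (br y z) = - br y (br x z).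
Proof.
apply/eqP; rewrite -addr_eq0; apply/eqP.
by have := ad_sq0 (x + y) z; rewrite !brDl !brDr !ad_sq0 add0r addr0.
Qed.

Lemma br_br_eq0 x y z : br x (br y z) = 0.
Proof.
apply/eqP/negP => /negP xyz_neq0.
have yxz_neq0 : br y (br x z) != 0 by rewrite -oppr_eq0 -br_br_anti.
have /vlineP [k yz] := br_in_line yxz_neq0 z.
by move: xyz_neq0; rewrite yz brZr br_br_anti ad_sq0 br0r oppr0 scaler0 eqxx.
Qed.

End SquareZero.

Section Eigenvector.

Variables x a : V.
Hypotheses (a_neq0 : a != 0) (br_xa : br x a = a).

Lemma br_line_of_fixed y w : br y a = a -> br y w \in <[a]>%VS.
Proof. by move=> ya; rewrite -{1}ya br_in_line ?ya. Qed.

Lemma br_a_line w : br a w \in <[a]>%VS.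
Proof.
have ax_neq0 : br a x != 0 by rewrite br_anti br_xa oppr_eq0.
have /vlineP [k ->] := br_in_line ax_neq0 w.
by apply/vlineP; exists (- k); rewrite br_anti br_xa scalerN scaleNr.
Qed.

Lemma central_of_commuting z : br x z = 0 -> br z a = 0 -> in_center br z.
Proof.
move=> xz za w.
have /vlineP [al xw] := br_line_of_fixed w br_xa.
have /vlineP [e zw] : br z w \in <[a]>%VS.
  have xza : br (x + z) a = a by rewrite brDl br_xa za addr0.
  have := memvB (br_line_of_fixed w xza) (br_line_of_fixed w br_xa).
  by rewrite brDl addrC addKr.
have := br_jacobi x z w.
rewrite zw brZr br_xa [br w x]br_anti xw brNr brZr za xz br0r scaler0 oppr0 !addr0.
by move/eqP; rewrite scaler_eq0 (negbTE a_neq0) orbF => /eqP e0; rewrite e0 scale0r.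
Qed.

Lemma eigvec_decomposition u :
  exists z al be, in_center br z /\ u = z + al *: a + be *: x.
Proof.
have /vlineP [al xu] := br_line_of_fixed u br_xa.
have /vlineP [be au'] := br_a_line (u - al *: a).
exists (u - al *: a + be *: x), al, (- be); split; last first.
  by rewrite scaleNr addrAC addrK subrK.
apply: central_of_commuting.
  by rewrite !brDr brNr !brZr br_xa xu brxx scaler0 addr0 subrr.
by rewrite brDl brZl br_xa [br _ a]br_anti au' addrC subrr.
Qed.

Lemma derived_sub_line : (derived_alg br <= <[a]>)%VS.
Proof.
apply/span_subvP => _ /allpairsP [[u w] [_ _ ->]] /=.
have [z [al [be [z_central ->]]]] := eigvec_decomposition u.
rewrite !brDl z_central add0r !brZl.
by rewrite memvD ?memvZ ?br_a_line ?(br_line_of_fixed w br_xa).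
Qed.

Hypothesis br_pure : lie_pure br.

Lemma center_eq0 z : in_center br z -> z = 0.
Proof.
move=> z_central; have /vlineP [e z_eq] := subvP derived_sub_line z (br_pure z_central).
have : br x z = 0 by rewrite br_anti z_central oppr0.
rewrite z_eq brZr br_xa => /eqP; rewrite scaler_eq0 (negbTE a_neq0) orbF.
by move=> /eqP ->; rewrite scale0r.
Qed.

Lemma basis_eigvec : basis_of fullv [:: a; - x].
Proof.
rewrite /basis_of span_cons span_seq1 free_cons span_seq1 seq1_free.
apply/and3P; split.
- rewrite eqEsubv subvf /=; apply/subvP => u _.
  have [z [al [be [/center_eq0 -> ->]]]] := eigvec_decomposition u.
  rewrite add0r -[be *: x]opprK -scalerN -scaleNr.
  by rewrite memv_add ?memvZ ?memv_line.
- apply/vlineP => -[k a_eq].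
  by move: a_neq0; rewrite -br_xa a_eq brZr brNr brxx oppr0 scaler0 eqxx.
- apply: contraNneq a_neq0 => /eqP; rewrite oppr_eq0 => /eqP x0.
  by rewrite -br_xa x0 br0l.
Qed.

End Eigenvector.

End LieBracket.

Unset Implicit Arguments.

Theorem corollary2p7 (F : fieldType) (V : vectType F) (br : V -> V -> V) :
  2%N \notin [pchar F] ->
  is_lie_bracket br ->
  lie_pure br -> ~ lie_nilpotent br -> lie_solvable br ->
  has_breadth br 1 ->
  exists x y : V, basis_of fullv [:: x; y] /\ br x y = x.
Proof.
move=> _ br_lie br_pure not_nilpotent _ [_ breadth_le1].
have [[x [w xxw_neq0]] | ad_sq0] := classic (exists x w, br x (br x w) != 0).
  have [y [a [a_neq0 br_ya]]] := eigvec_of_ad_sq_neq0 br_lie breadth_le1 xxw_neq0.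
  exists a, (- y); split.
    exact: (basis_eigvec br_lie breadth_le1 a_neq0 br_ya br_pure).
  by rewrite (brNr br_lie) (br_anti br_lie) opprK.
case: not_nilpotent; apply: lie_nilpotent_of_br_br_eq0 => //.
apply: br_br_eq0 => // x w; apply/eqP; apply: contra_notT ad_sq0 => xxw_neq0.
by exists x, w.
Qed.
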